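(* Let $N>1$ and $d>0$ be real numbers with $$d^{2}>\frac{16N^{2}}{27}\left(\left(8N^{2}-6\right)\sqrt{1-\frac{3N^{-2}}{4}}+8N^{2}-9\right).$$ Let $F(z)=(1-Nz)^{2}\left(1-\frac{d^{2}}{z^{2}-1}\right)$, $\varphi(z)=\frac{1}{d^{2}}+\frac{1-N^{-1}z}{(z^{2}-1)^{2}}$ and $I_{2}=(1,\sqrt{1+d^{2}})$. Then the equation $\varphi(z)=0$ has exactly two roots $z_{02}<z_{03}$ in $I_{2}$. Moreover, for real $A>0$, the equation $F(z)+A=0$ (i.e. the quartic equation $(1-Nz)^{2}(z^{2}-1-d^{2})+A(z^{2}-1)=0$ in the complex variable $z$) has four real roots when $-F(z_{02})<A\leq -F(z_{03})$, and has two real and two (non-real) complex roots when $A<-F(z_{02})$ and when $A>-F(z_{03})$.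
   Context: This is the (dimensionless) dispersion relation for Kelvin–Helmholtz perturbations of two thin co-flowing layers (a pure incompressible fluid and a bubbly fluid): $z=ad/(u_{20}-c)$ with $c$ the phase velocity, $d=1/(bk)$, $N=M/d$ with $M=(u_{20}-u_{10})/a$, and $A=h_0\rho_{20}/((H_0-h_0)\rho_{10})>0$. The equation $F(z)+A=0$ is regarded as the fourth-degree polynomial equation obtained by multiplying by $z^{2}-1$; roots are counted with multiplicity. *)

From HB Require Import structures.
From mathcomp Require Import all_boot all_order all_algebra.
From mathcomp Require Import reals.
From mathcomp Require Import complex.
Set Implicit Arguments. Unset Strict Implicit. Unset Printing Implicit Defensive.
Import Order.TTheory GRing.Theory Num.Theory.
Local Open Scope ring_scope.

Definition KH_F {R : realType} (N d z : R) : R :=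
  (1 - N * z) ^+ 2 * (1 - d ^+ 2 / (z ^+ 2 - 1)).

Definition KH_phi {R : realType} (N d z : R) : R :=
  1 / d ^+ 2 + (1 - N^-1 * z) / (z ^+ 2 - 1) ^+ 2.

Definition KH_quartic {R : realType} (N d A : R) : {poly R} :=
  (1 - N *: 'X) ^+ 2 * ('X ^+ 2 - (1 + d ^+ 2)%:P) + A *: ('X ^+ 2 - 1).

Definition KH_quarticC {R : realType} (N d A : R) : {poly R[i]} :=
  map_poly (real_complex R) (KH_quartic N d A).

Definition roots_with_mult {R : realType} (p : {poly R[i]}) (s : seq R[i]) :=
  p = lead_coef p *: \prod_(x <- s) ('X - x%:P).

Definition is_real_c {R : realType} (z : R[i]) : bool := Im z == 0.

From HB Require Import structures.
From mathcomp Require Import all_boot all_order all_algebra.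
From mathcomp Require Import reals complex polyrcf.
From mathcomp Require Import boolp classical_sets functions topology normedtype derive.
From mathcomp Require Import ring lra.
Import Order.TTheory GRing.Theory Num.Theory.
Import numFieldNormedType.Exports.
Local Open Scope ring_scope.

(* phi has the sign of the polynomial phi_num = N (z^2 - 1)^2 - d^2 (z - N), which is
   strictly convex on (1, +oo), positive at N and at sqrt (1 + d^2), and, by the
   hypothesis on d, negative somewhere in between: so it has exactly two zeros
   z02 < z03 in (1, +oo).  Since F' has the sign of phi_num on (1, +oo), F increases
   on (1, z02], decreases on [z02, z03] and increases again, while it decreases on
   (-oo, -1).  The quartic is (z^2 - 1) (F z + A) for |z| > 1 and negative on [-1, 1],
   so its real roots solve F z = -A: one below -1, and above 1 either three, found by
   sign changes (the fourth root is then real too), or exactly one.  In the latter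
   case both real roots are simple, since a double root of the quartic is a zero of
   phi_num, so the remaining quadratic factor has no real root. *)

Section ComplexRoots.
Context {R : realType}.
Local Notation toC := (real_complex R).

Lemma roots_with_multP (p : {poly R[i]}) (c : R[i]) (s : seq R[i]) :
  p = c *: \prod_(z <- s) ('X - z%:P) -> roots_with_mult p s.
Proof.
move=> ->; rewrite /roots_with_mult lead_coefZ.
by rewrite (monicP (monic_prod_XsubC _ _ _)) mulr1.
Qed.

Lemma size_roots_with_mult {p : {poly R[i]}} {s : seq R[i]} :
  p != 0 -> roots_with_mult p s -> size s = (size p).-1.
Proof.
move=> p0 ps; have lp0 : lead_coef p != 0 by rewrite lead_coef_eq0.
by rewrite [in RHS]ps size_scale // size_prod_XsubC.
Qed.

Lemma is_real_cE (z : R[i]) : is_real_c z = (z \is Num.real).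
Proof. by apply/idP/idP => [/eqP/Creal_ImP | /Creal_ImP/eqP]. Qed.

Lemma is_real_c_toC (x : R) : is_real_c (toC x).
Proof. by rewrite is_real_cE; apply/complex_realP; exists x. Qed.

Lemma roots_with_mult_real (p : {poly R}) (c : R) (rs : seq R) :
  p = c%:P * \prod_(r <- rs) ('X - r%:P) -> roots_with_mult (map_poly toC p) (map toC rs).
Proof.
move=> ->; apply: (@roots_with_multP _ (toC c)).
rewrite rmorphM /= map_polyC /= rmorph_prod /= big_map mul_polyC.
by apply: congr1; apply: eq_bigr => r _; rewrite map_polyXsubC.
Qed.

Lemma roots_with_mult_real_cofactor {p q : {poly R}} {rs : seq R} :
  p = q * \prod_(r <- rs) ('X - r%:P) -> (forall x, ~~ root q x) ->
  exists2 cs : seq R[i], roots_with_mult (map_poly toC p) (map toC rs ++ cs)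
    & ~~ has is_real_c cs.
Proof.
move=> -> qnoroot; have [cs qcs] := closed_field_poly_normal (map_poly toC q).
exists cs.
  apply: (@roots_with_multP _ (lead_coef (map_poly toC q))).
  rewrite rmorphM /= rmorph_prod /= {1}qcs -scalerAl big_cat /= mulrC big_map.
  by congr (_ *: (_ * _)); apply: eq_bigr => r _; rewrite map_polyXsubC.
apply/hasPn => z zcs; apply/negP; rewrite is_real_cE => /complex_realP[x zx].
have q0 : q != 0 by apply: contraNneq (qnoroot 0) => ->; rewrite root0.
have : root (map_poly toC q) z.
  rewrite qcs rootZ ?root_prod_XsubC //.
  by rewrite lead_coef_eq0 map_poly_eq0.
by rewrite zx fmorph_root (negbTE (qnoroot _)).
Qed.

End ComplexRoots.

Lemma root_deriv_cofactor (F : comNzRingType) (q : {poly F}) (x : F) :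
  root q x -> root (q * ('X - x%:P))^`() x.
Proof. by move=> /eqP qx; rewrite /root derivM derivXsubC !hornerE qx; apply/eqP; ring. Qed.

Lemma size_mul_prod_XsubC {F : fieldType} (q : {poly F}) (rs : seq F) :
  q != 0 -> size (q * \prod_(r <- rs) ('X - r%:P)) = (size q + size rs)%N.
Proof.
by move=> q0; rewrite size_Mmonic ?monic_prod_XsubC // size_prod_XsubC addnS.
Qed.

Lemma poly2_factor (F : fieldType) (q : {poly F}) :
  size q = 2 -> exists y c, q = c%:P * ('X - y%:P).
Proof.
move=> q2; have [y /factor_theorem[q' qq']] := poly2_root q2.
have q'0 : q' != 0 by apply: contra_eq_neq q2 => q'0; rewrite qq' q'0 mul0r size_poly0.
have := @size_mul_prod_XsubC _ _ [:: y] q'0; rewrite big_seq1 -qq' q2 addn1 => -[] /esym q'1.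
by exists y, q'`_0; rewrite qq' -size1_polyC ?q'1.
Qed.

(* KH_phi N d z = phi_num.[z] / (N d^2 (z^2 - 1)^2) *)
Definition phi_num {R : realType} (N d : R) : {poly R} :=
  N%:P * ('X ^+ 2 - 1) ^+ 2 - (d ^+ 2)%:P * ('X - N%:P).

Definition KH_dF {R : realType} (N d z : R) :=
  2 * (N * z - 1) * (phi_num N d).[z] / (z ^+ 2 - 1) ^+ 2.

Section KelvinHelmholtz.
Context {R : realType} {N d : R}.
Hypotheses (N_gt1 : 1 < N) (d_gt0 : 0 < d).

Let d2_gt0 : 0 < d ^+ 2. Proof. exact: exprn_gt0. Qed.

(* lra and nra ignore section hypotheses, so they are moved to the goal first. *)
Local Ltac lra' := move: N_gt1 d_gt0 d2_gt0 => ? ? ?; lra.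
Local Ltac nra' := move: N_gt1 d_gt0 d2_gt0 => ? ? ?; nra.

Let N_neq0 : N != 0. Proof. lra'. Qed.
Let d_neq0 : d != 0. Proof. lra'. Qed.

Local Notation sd := (Num.sqrt (1 + d ^+ 2)).

Let sqr_sqrt : sd ^+ 2 = 1 + d ^+ 2.
Proof. by rewrite sqr_sqrtr //; lra'. Qed.

Let sqrt_gt1 : 1 < sd.
Proof. have := sqrtr_ge0 (1 + d ^+ 2); move: sqr_sqrt; nra'. Qed.

Local Notation phi_num := (phi_num N d).
Local Notation KH_dF := (KH_dF N d).

Lemma phi_numE z : phi_num.[z] = N * (z ^+ 2 - 1) ^+ 2 - d ^+ 2 * (z - N).
Proof. by rewrite /phi_num !hornerE. Qed.

Lemma KH_phi_eq0 z : 1 < z ^+ 2 -> (KH_phi N d z == 0) = root phi_num z.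
Proof.
move=> z2; have z0 : z ^+ 2 - 1 != 0 by lra'.
have -> : KH_phi N d z = phi_num.[z] / (N * d ^+ 2 * (z ^+ 2 - 1) ^+ 2).
  by rewrite /KH_phi phi_numE; field; rewrite z0 N_neq0 d_neq0.
by rewrite /root mulf_eq0 invr_eq0 !mulf_eq0 (negbTE z0) (negbTE N_neq0)
  (negbTE d_neq0) !orbF.
Qed.

Lemma phi_num_divdiff a b c :
  (c - b) * phi_num.[a] - (c - a) * phi_num.[b] + (b - a) * phi_num.[c] =
  (b - a) * (c - b) * (c - a) * (N * (a ^+ 2 + b ^+ 2 + c ^+ 2 + a * b + b * c + c * a - 2)).
Proof. rewrite !phi_numE; ring. Qed.

Lemma phi_num_divdiff_gt0 {a b c : R} : 1 < a -> a < b -> b < c ->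
  0 < (c - b) * phi_num.[a] - (c - a) * phi_num.[b] + (b - a) * phi_num.[c].
Proof.
move=> a1 ab bc; rewrite phi_num_divdiff !mulr_gt0 ?subr_gt0 //; [lra'|lra'|nra'].
Qed.

Lemma phi_num_gt0_ltN1 {z : R} : z < -1 -> 0 < phi_num.[z].
Proof.
move=> z1; have -> : phi_num.[z] = N * (z ^+ 2 - 1) ^+ 2 + d ^+ 2 * (N - z).
  by rewrite phi_numE; ring.
by apply: ltr_wpDl; [rewrite mulr_ge0 ?sqr_ge0 | rewrite mulr_gt0]; lra'.
Qed.

Lemma phi_num_N_gt0 : 0 < phi_num.[N].
Proof. by rewrite phi_numE subrr mulr0 subr0 mulr_gt0 ?exprn_gt0 //; nra'. Qed.

Lemma phi_num_sqrt_gt0 : 0 < phi_num.[sd].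
Proof.
have -> : phi_num.[sd] = d ^+ 2 * (N * sd ^+ 2 - sd) by rewrite phi_numE sqr_sqrt; ring.
by rewrite mulr_gt0 //; move: sqrt_gt1; nra'.
Qed.

Lemma phi_num_lt0_lt_sqrt {z : R} : 1 < z -> phi_num.[z] < 0 -> z < sd.
Proof.
rewrite phi_numE => z1 neg.
have t0 : 0 < N * (z ^+ 2 - 1) by rewrite mulr_gt0 //; nra'.
have lt1 : d ^+ 2 * (z - N) < d ^+ 2 * (N * (z ^+ 2 - 1)) by rewrite ltr_pM2l //; nra'.
have : z ^+ 2 - 1 < d ^+ 2 by rewrite -(ltr_pM2l t0); lra.
move: sqr_sqrt (sqrtr_ge0 (1 + d ^+ 2)); nra'.
Qed.

(* The minimum of N (z^2 - 1)^2 / (z - N) over z > N is attained at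
   z = (2N + sqrt (4N^2 - 3)) / 3, and the hypothesis on d says that d^2 exceeds it. *)
Lemma phi_num_lt0_threshold :
  d ^+ 2 > (16 * N ^+ 2 / 27) *
           ((8 * N ^+ 2 - 6) * Num.sqrt (1 - 3 * N ^- 2 / 4) + 8 * N ^+ 2 - 9) ->
  exists2 z, N < z & phi_num.[z] < 0.
Proof.
set u := Num.sqrt _ => hd.
have N2 : 1 < N ^+ 2 by nra'.
have invN2_gt0 : 0 < N ^- 2 by rewrite invr_gt0; lra.
have invN2_lt1 : N ^- 2 < 1 by rewrite invf_lt1; lra.
have u2 : u ^+ 2 = 1 - 3 * N ^- 2 / 4 by rewrite sqr_sqrtr //; lra.
pose w := 2 * N * u.
have w2 : w ^+ 2 = 4 * N ^+ 2 - 3 by rewrite /w !exprMn u2; field.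
have wN : N < w by have := sqrtr_ge0 (1 - 3 * N ^- 2 / 4); rewrite -/u /w; nra'.
exists ((2 * N + w) / 3); first lra.
have -> : phi_num.[(2 * N + w) / 3] =
    (w - N) / 3 * (16 * N ^+ 2 / 27 * ((8 * N ^+ 2 - 6) * u + 8 * N ^+ 2 - 9) - d ^+ 2)
    + N / 81 * (w ^+ 2 + 8 * N * w - 36 * N ^+ 2 + 27) * (w ^+ 2 - (4 * N ^+ 2 - 3)).
  by rewrite phi_numE /w; field.
rewrite w2 subrr mulr0 addr0 pmulr_rlt0 ?subr_lt0 //; lra.
Qed.

Lemma phi_num_two_roots :
  d ^+ 2 > (16 * N ^+ 2 / 27) *
           ((8 * N ^+ 2 - 6) * Num.sqrt (1 - 3 * N ^- 2 / 4) + 8 * N ^+ 2 - 9) ->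
  exists z02 z03,
    [/\ N < z02, z02 < z03, z03 < sd, root phi_num z02 & root phi_num z03].
Proof.
move=> /phi_num_lt0_threshold [z Nz neg].
have zs : z < sd by apply: phi_num_lt0_lt_sqrt => //; lra'.
have [|z02] := @poly_ivtoo _ phi_num N z (ltW Nz).
  by rewrite pmulr_rlt0 // phi_num_N_gt0.
rewrite in_itv /= => /andP[N02 z02z] r02.
have [|z03] := @poly_ivtoo _ phi_num z sd (ltW zs).
  by rewrite pmulr_llt0 // phi_num_sqrt_gt0.
rewrite in_itv /= => /andP[zz03 z03s] r03.
by exists z02, z03; split => //; lra.
Qed.

Lemma is_derive_KH_F {x : R} : 1 < x ^+ 2 -> is_derive x 1 (KH_F N d) (KH_dF x).
Proof.
move=> x2; pose P : {poly R} := (1 - N *: 'X) ^+ 2; pose T : {poly R} := 'X ^+ 2 - 1.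
have TE z : T.[z] = z ^+ 2 - 1 by rewrite /T !hornerE.
have T0 : T.[x] != 0 by rewrite TE; lra.
have dTV : is_derive x 1 (fun z => T.[z]^-1) (- T.[x] ^- 2 *: T^`().[x]).
  apply: DeriveDef; first exact: derivableV.
  by rewrite deriveV // -derive1E -derivE.
have -> : KH_F N d = horner P * (cst 1 - d ^+ 2 *: (fun z => T.[z]^-1)).
  by apply/funext => z; rewrite /KH_F /= !fctE TE /P !hornerE.
apply: trigger_derive; rewrite /KH_dF phi_numE /P /T !poly.derivE !fctE !hornerE /=.
by rewrite /GRing.scale /=; field; rewrite -TE.
Qed.

Lemma KH_F_mvt {x y : R} : x < y -> 1 < x \/ y < -1 ->
  exists2 c, x < c < y & KH_F N d y - KH_F N d x = KH_dF c * (y - x).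
Proof.
move=> xy xy1.
have c2 c : x <= c <= y -> 1 < c ^+ 2 by case: xy1 => ? /andP[? ?]; nra.
have dF : {in `]x, y[, forall c : R, is_derive c 1 (KH_F N d) (KH_dF c)}.
  by move=> c; rewrite in_itv /= => /andP[? ?]; apply/is_derive_KH_F/c2; rewrite !ltW.
have cF : {within `[x, y], continuous (KH_F N d)}%classic.
  apply: derivable_within_continuous => c; rewrite in_itv /= => /c2 c21.
  by have [] := is_derive_KH_F c21.
have [c] := MVT xy dF cF; rewrite in_itv /= => xcy ->.
by exists c.
Qed.

Lemma KH_dF_gt0 {c : R} : 1 < c -> 0 < phi_num.[c] -> 0 < KH_dF c.
Proof. by move=> c1 pc; rewrite /KH_dF divr_gt0 ?exprn_gt0 ?mulr_gt0 //; nra'. Qed.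

Lemma KH_dF_lt0 {c : R} : 1 < c -> phi_num.[c] < 0 -> KH_dF c < 0.
Proof.
move=> c1 pc; rewrite /KH_dF pmulr_llt0 ?invr_gt0 ?exprn_gt0 ?pmulr_rlt0 //; nra'.
Qed.

Lemma KH_F_lt_phi_num_gt0 {x y : R} : 1 < x -> x < y -> (forall c, x < c < y -> 0 < phi_num.[c]) ->
  KH_F N d x < KH_F N d y.
Proof.
move=> x1 xy pos; have [c /andP[xc cy] eF] := KH_F_mvt xy (or_introl x1).
by rewrite -subr_gt0 eF mulr_gt0 ?subr_gt0 // KH_dF_gt0 ?pos ?xc //; lra.
Qed.

Lemma KH_F_gt_phi_num_lt0 {x y : R} : 1 < x -> x < y -> (forall c, x < c < y -> phi_num.[c] < 0) ->
  KH_F N d y < KH_F N d x.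
Proof.
move=> x1 xy neg; have [c /andP[xc cy] eF] := KH_F_mvt xy (or_introl x1).
by rewrite -subr_lt0 eF pmulr_llt0 ?subr_gt0 // KH_dF_lt0 ?neg ?xc //; lra.
Qed.

Lemma KH_F_decr_ltN1 : {in `]-oo, -1[ &, {homo KH_F N d : x y /~ x < y}}.
Proof.
move=> x y; rewrite !in_itv /= => x1 _ yx.
have [c /andP[yc cx] eF] := KH_F_mvt yx (or_intror x1).
have c1 : c < -1 by lra.
rewrite -subr_lt0 eF pmulr_llt0 ?subr_gt0 // /KH_dF pmulr_llt0 ?invr_gt0 ?exprn_gt0 //; last nra.
by rewrite pmulr_llt0 ?phi_num_gt0_ltN1 //; nra'.
Qed.

Local Notation Q A := (KH_quartic N d A).

Lemma horner_KH_quartic (A : R) z :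
  (Q A).[z] = (1 - N * z) ^+ 2 * (z ^+ 2 - 1 - d ^+ 2) + A * (z ^+ 2 - 1).
Proof. by rewrite /KH_quartic !hornerE; ring. Qed.

Lemma horner_KH_quartic_F (A : R) z : 1 < z ^+ 2 -> (Q A).[z] = (z ^+ 2 - 1) * (KH_F N d z + A).
Proof. by move=> z2; rewrite horner_KH_quartic /KH_F; field; lra. Qed.

Lemma root_KH_quartic (A : R) z : 1 < z ^+ 2 -> root (Q A) z = (KH_F N d z == - A).
Proof.
move=> z2; have z0 : z ^+ 2 - 1 != 0 by lra.
by rewrite /root horner_KH_quartic_F // mulf_eq0 (negbTE z0) addr_eq0.
Qed.

Lemma KH_quartic_lt0 (A : R) z : 0 < A -> z ^+ 2 <= 1 -> (Q A).[z] < 0.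
Proof.
move=> A0 z2; rewrite horner_KH_quartic.
have : (1 - N * z) ^+ 2 * (z ^+ 2 - 1 - d ^+ 2) <= 0.
  by rewrite mulr_ge0_le0 ?sqr_ge0 //; lra'.
case: (ltrP (z ^+ 2) 1) => [z2lt1 | z2ge1].
  have : A * (z ^+ 2 - 1) < 0 by rewrite pmulr_rlt0 // subr_lt0.
  lra.
have -> : z ^+ 2 = 1 by apply/le_anti; rewrite z2 z2ge1.
have : 0 < (1 - N * z) ^+ 2 by rewrite exprn_even_gt0 //= subr_eq0; apply/eqP; nra'.
rewrite subrr mulr0 addr0 sub0r mulrN; nra'.
Qed.

Lemma horner_KH_quartic_sqrt (A : R) z : z ^+ 2 = 1 + d ^+ 2 -> (Q A).[z] = A * d ^+ 2.
Proof. by move=> z2; rewrite horner_KH_quartic z2; ring. Qed.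

Lemma size_KH_quartic (A : R) : size (Q A) = 5.
Proof.
have lin : size (1 - N *: 'X : {poly R}) = 2.
  by rewrite addrC size_polyDl size_polyN size_scale ?size_polyX ?size_polyC ?oner_neq0.
have sq : size ((1 - N *: 'X : {poly R}) ^+ 2) = 3.
  have := size_exp (1 - N *: 'X) 2; rewrite lin.
  by case: (size _) => [|[|[|[]]]].
have nz (p : {poly R}) : size p = 3 -> p != 0 by move=> p3; rewrite -size_poly_eq0 p3.
rewrite /KH_quartic size_polyDl size_mul ?nz ?sq ?size_XnsubC //.
by rewrite (leq_ltn_trans (size_scale_leq _ _)) // size_XnsubC.
Qed.

Lemma KH_quartic_neq0 (A : R) : Q A != 0.
Proof. by rewrite -size_poly_eq0 size_KH_quartic. Qed.

Lemma KH_quartic_deriv (A : R) z :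
  (z ^+ 2 - 1) * (Q A)^`().[z] = 2 * z * (Q A).[z] + 2 * (N * z - 1) * phi_num.[z].
Proof.
have -> : (Q A)^`().[z] =
    - 2 * N * (1 - N * z) * (z ^+ 2 - 1 - d ^+ 2) + 2 * z * ((1 - N * z) ^+ 2 + A).
  by rewrite /KH_quartic !poly.derivE !hornerE; ring.
by rewrite horner_KH_quartic phi_numE; ring.
Qed.

Lemma KH_quartic_simple_root (A : R) z : 1 < z ^+ 2 -> root (Q A) z -> ~~ root phi_num z ->
  ~~ root (Q A)^`() z.
Proof.
move=> z2 /rootP Qz; apply: contra => /rootP Q'z; apply/rootP.
have := KH_quartic_deriv A z; rewrite Qz Q'z !mulr0 add0r => /esym/eqP.
by rewrite mulf_eq0 => /orP[|/eqP //]; rewrite mulf_eq0 subr_eq0 => /orP[] /eqP; nra'.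
Qed.

Lemma KH_quartic_root_ltN1 {A : R} : 0 < A -> exists2 r, r < -1 & root (Q A) r.
Proof.
move=> A0; have Qm1 : (Q A).[-1] < 0 by apply: KH_quartic_lt0 => //; nra.
have Qms : 0 < (Q A).[- sd] by rewrite horner_KH_quartic_sqrt ?sqrrN // mulr_gt0.
have [r] : {r | r \in `]- sd, -1[ & root (Q A) r}.
  by apply: poly_ivtoo; [rewrite lerN2 ltW | rewrite pmulr_rlt0].
by rewrite in_itv /= => /andP[_ r1] rr; exists r.
Qed.

Lemma KH_quartic_root_ltN1_uniq (A : R) r r' : r < -1 -> r' < -1 ->
  root (Q A) r -> root (Q A) r' -> r = r'.
Proof.
move=> r1 r'1; rewrite !root_KH_quartic; [|nra|nra] => /eqP Fr /eqP Fr'.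
by apply: (dec_inj_in (le_nmono_in KH_F_decr_ltN1)); rewrite ?in_itv // Fr Fr'.
Qed.

Lemma KH_quartic_four_real_roots {a b : R} (A : R) : 1 < a -> a < b -> 0 < A ->
  - KH_F N d a < A -> A <= - KH_F N d b ->
  exists s : seq R[i],
    [/\ size s = 4%N, roots_with_mult (KH_quarticC N d A) s & all is_real_c s].
Proof.
move=> a_gt1 ab A0 Aa Ab; have b_gt1 : 1 < b by lra.
have Qa : 0 < (Q A).[a] by rewrite horner_KH_quartic_F ?mulr_gt0 //; nra.
have Qb : (Q A).[b] <= 0.
  by rewrite horner_KH_quartic_F ?mulr_ge0_le0 //; [nra | lra | nra].
have [r1 r1_ltN1 root1] := KH_quartic_root_ltN1 A0.
have [r2] : {r | r \in `]1, a[ & root (Q A) r}.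
  apply: poly_ivtoo; first exact: ltW.
  by rewrite pmulr_llt0 // KH_quartic_lt0 // expr1n.
rewrite in_itv /= => /andP[r2_gt1 r2_lt_a] root2.
have [x] : {x | x \in `[a, b]%R & root (Q A) x}.
  by apply: polyrcf.poly_ivt; [exact: ltW | rewrite pmulr_rle0].
rewrite in_itv /= => /andP[x_ge_a _] rootx.
have x_gt_a : a < x.
  by rewrite lt_neqAle x_ge_a andbT; apply: contraTneq rootx => <-; rewrite /root gt_eqF.
have [q Qq] : exists q, Q A = q * \prod_(r <- [:: r1; r2; x]) ('X - r%:P).
  apply: uniq_roots_prod_XsubC; first by rewrite /= root1 root2 rootx.
  by rewrite uniq_rootsE (sorted_uniq lt_trans ltxx) //= andbT; apply/andP; split; lra.
have q0 : q != 0 by apply: contraNneq (KH_quartic_neq0 A) => q0; rewrite Qq q0 mul0r.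
have [y [c qyc]] : exists y c, q = c%:P * ('X - y%:P).
  apply: poly2_factor; have := size_KH_quartic A.
  by rewrite Qq size_mul_prod_XsubC // addn3 => -[].
exists (map (real_complex R) [:: y; r1; r2; x]); split => //.
  by apply: (@roots_with_mult_real _ _ c); rewrite Qq qyc [in RHS]big_cons mulrA.
by apply/allP => _ /mapP[r _ ->]; apply: is_real_c_toC.
Qed.

Section TwoRoots.
Context {z02 z03 : R}.
Hypotheses (z02_gt1 : 1 < z02) (z02_lt_z03 : z02 < z03).
Hypotheses (root02 : root phi_num z02) (root03 : root phi_num z03).

Local Ltac lra'' := move: z02_gt1 z02_lt_z03 => ? ?; lra.
Local Ltac nra'' := move: z02_gt1 z02_lt_z03 => ? ?; nra.

Lemma phi_num_gt0_left {x : R} : 1 < x -> x < z02 -> 0 < phi_num.[x].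
Proof.
move=> x1 x02; have := phi_num_divdiff_gt0 x1 x02 z02_lt_z03.
by rewrite (rootP root02) (rootP root03) !mulr0 subr0 addr0 pmulr_rgt0 // subr_gt0.
Qed.

Lemma phi_num_lt0_mid {x : R} : z02 < x -> x < z03 -> phi_num.[x] < 0.
Proof.
move=> x02 x03; have := phi_num_divdiff_gt0 z02_gt1 x02 x03.
by rewrite (rootP root02) (rootP root03) !mulr0 sub0r addr0 oppr_gt0 pmulr_rlt0 // subr_gt0.
Qed.

Lemma phi_num_gt0_right {x : R} : z03 < x -> 0 < phi_num.[x].
Proof.
move=> x03; have := phi_num_divdiff_gt0 z02_gt1 z02_lt_z03 x03.
by rewrite (rootP root02) (rootP root03) !mulr0 subr0 add0r pmulr_rgt0 // subr_gt0.
Qed.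

Lemma phi_num_root_gt1 {x : R} : 1 < x -> root phi_num x -> x = z02 \/ x = z03.
Proof.
move=> x1 /rootP px; case: (ltgtP x z02) => [x02|x02|]; last by left.
  by move: (phi_num_gt0_left x1 x02); rewrite px ltxx.
case: (ltgtP x z03) => [x03|x03|]; last by right.
  by move: (phi_num_lt0_mid x02 x03); rewrite px ltxx.
by move: (phi_num_gt0_right x03); rewrite px ltxx.
Qed.

Lemma KH_F_incr_left : {in `]1, z02] &, {homo KH_F N d : x y / x < y}}.
Proof.
move=> x y; rewrite !in_itv /= => /andP[x1 _] /andP[_ y02] xy.
by apply: KH_F_lt_phi_num_gt0 => // c /andP[xc cy]; apply: phi_num_gt0_left; lra.
Qed.

Lemma KH_F_decr_mid : {in `[z02, z03] &, {homo KH_F N d : x y /~ x < y}}.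
Proof.
move=> x y; rewrite !in_itv /= => /andP[_ x03] /andP[y02 _] yx.
by apply: KH_F_gt_phi_num_lt0 => [|//|c /andP[yc cx]]; [|apply: phi_num_lt0_mid]; lra''.
Qed.

Lemma KH_F_incr_right : {in `[z03, +oo[ &, {homo KH_F N d : x y / x < y}}.
Proof.
move=> x y; rewrite !in_itv /= !andbT => x03 _ xy.
by apply: KH_F_lt_phi_num_gt0 => [|//|c /andP[xc cy]]; [|apply: phi_num_gt0_right]; lra''.
Qed.

Lemma KH_F03_lt_F02 : KH_F N d z03 < KH_F N d z02.
Proof. by apply: KH_F_decr_mid; rewrite ?in_itv /= ?lexx ?ltW. Qed.

Lemma KH_F_le_F02 {x : R} : 1 < x -> x <= z03 -> KH_F N d x <= KH_F N d z02.
Proof.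
move=> x1 x03; case: (lerP x z02) => x02.
  by apply: (ltW_homo_in KH_F_incr_left); rewrite ?in_itv /= ?x1 ?x02 ?lexx //; lra''.
by apply: (ltW_nhomo_in KH_F_decr_mid); rewrite ?in_itv /= ?x03 ?lexx ?ltW //; lra''.
Qed.

Lemma KH_F03_le_F {x : R} : z02 <= x -> KH_F N d z03 <= KH_F N d x.
Proof.
move=> x02; case: (lerP x z03) => x03.
  by apply: (ltW_nhomo_in KH_F_decr_mid); rewrite ?in_itv /= ?x02 ?x03 ?lexx //; lra''.
by apply: (ltW_homo_in KH_F_incr_right); rewrite ?in_itv /= ?lexx ?ltW.
Qed.

Lemma KH_F_level_uniq {v x y : R} : KH_F N d z02 < v \/ v < KH_F N d z03 ->
  1 < x -> 1 < y -> KH_F N d x = v -> KH_F N d y = v -> x = y.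
Proof.
move=> [v02 | v03] x1 y1 Fx Fy.
  have right z : 1 < z -> KH_F N d z = v -> z \in `[z03, +oo[.
    move=> z1 Fz; rewrite in_itv /= andbT leNgt; apply/negP => /ltW z_le03.
    by have := KH_F_le_F02 z1 z_le03; rewrite Fz; lra.
  by apply: (inc_inj_in (le_mono_in KH_F_incr_right)); rewrite ?right // Fx Fy.
have left z : 1 < z -> KH_F N d z = v -> z \in `]1, z02].
  move=> z1 Fz; rewrite in_itv /= z1 leNgt; apply/negP => /ltW z_ge02.
  by have := KH_F03_le_F z_ge02; rewrite Fz; lra.
by apply: (inc_inj_in (le_mono_in KH_F_incr_left)); rewrite ?left // Fx Fy.
Qed.

Lemma KH_quartic_two_real_roots (A : R) : 0 < A ->
  A < - KH_F N d z02 \/ - KH_F N d z03 < A ->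
  exists s : seq R[i],
    [/\ size s = 4%N, roots_with_mult (KH_quarticC N d A) s & count is_real_c s = 2%N].
Proof.
move=> A0 A_out; have F_out : KH_F N d z02 < - A \/ - A < KH_F N d z03 by lra.
have [r1 r1_ltN1 root1] := KH_quartic_root_ltN1 A0.
have [r2] : {r | r \in `]1, sd[ & root (Q A) r}.
  apply: poly_ivtoo; first exact: ltW.
  rewrite pmulr_llt0 ?KH_quartic_lt0 ?expr1n //.
  by rewrite horner_KH_quartic_sqrt // mulr_gt0.
rewrite in_itv /= => /andP[r2_gt1 _] root2.
have roots x : root (Q A) x -> x = r1 \/ x = r2.
  move=> rootx; case: (lerP (x ^+ 2) 1) => x2.
    by move: rootx; rewrite /root lt_eqF // KH_quartic_lt0.
  case: (ltrP x 0) => x0; [left | right].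
    by apply: (@KH_quartic_root_ltN1_uniq A) => //; nra.
  move: rootx root2; rewrite !root_KH_quartic //; last nra.
  by move=> /eqP Fx /eqP F2; apply: (KH_F_level_uniq F_out) => //; nra.
have simple r : root (Q A) r -> ~~ root (Q A)^`() r.
  move=> rootr; have [->|->] := roots r rootr.
    by apply: KH_quartic_simple_root => //; [nra | rewrite /root gt_eqF ?phi_num_gt0_ltN1].
  apply: KH_quartic_simple_root => //; first nra.
  apply/negP => /(phi_num_root_gt1 r2_gt1) r2z; move: root2.
  rewrite root_KH_quartic; last nra.
  by case: r2z => -> /eqP F2; have := KH_F03_lt_F02; lra.
have [q Qq] : exists q, Q A = q * \prod_(r <- [:: r1; r2]) ('X - r%:P).
  apply: uniq_roots_prod_XsubC; first by rewrite /= root1 root2.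
  by rewrite uniq_rootsE /= inE andbT; apply/eqP; lra.
have q_noroot y : ~~ root q y.
  apply/negP => qy; have /roots[]: root (Q A) y by rewrite Qq rootM qy.
    move=> yr1; have /negP[] := simple r1 root1; rewrite Qq big_cons big_seq1 mulrCA.
    by rewrite mulrC; apply: root_deriv_cofactor; rewrite rootM -yr1 qy.
  move=> yr2; have /negP[] := simple r2 root2; rewrite Qq big_cons big_seq1 mulrA.
  by apply: root_deriv_cofactor; rewrite rootM -yr2 qy.
have [cs rootsQ noreal] := roots_with_mult_real_cofactor Qq q_noroot.
exists (map (real_complex R) [:: r1; r2] ++ cs); split => //.
  rewrite (size_roots_with_mult _ rootsQ) ?size_map_poly ?size_KH_quartic //.
  by rewrite map_poly_eq0 KH_quartic_neq0.
by rewrite count_cat /= !is_real_c_toC; move: noreal; rewrite has_count lt0n negbK => /eqP->.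
Qed.

End TwoRoots.

End KelvinHelmholtz.

Theorem proposition3 (R : realType) (N d : R) :
  1 < N -> 0 < d ->
  d ^+ 2 > (16 * N ^+ 2 / 27) *
           ((8 * N ^+ 2 - 6) * Num.sqrt (1 - 3 * N ^- 2 / 4) + 8 * N ^+ 2 - 9) ->
  exists z02 z03 : R,
    [/\ 1 < z02 /\ z02 < z03 /\ z03 < Num.sqrt (1 + d ^+ 2),
        KH_phi N d z02 = 0 /\ KH_phi N d z03 = 0,
        (forall z : R, 1 < z -> z < Num.sqrt (1 + d ^+ 2) ->
           KH_phi N d z = 0 -> z = z02 \/ z = z03) &
        forall A : R, 0 < A ->
          ((- KH_F N d z02 < A /\ A <= - KH_F N d z03) ->
             exists s : seq R[i], [/\ size s = 4%N,
               roots_with_mult (KH_quarticC N d A) s & all is_real_c s]) /\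
          ((A < - KH_F N d z02 \/ - KH_F N d z03 < A) ->
             exists s : seq R[i], [/\ size s = 4%N,
               roots_with_mult (KH_quarticC N d A) s &
               count is_real_c s = 2%N])].
Proof.
move=> N_gt1 d_gt0 /(phi_num_two_roots N_gt1 d_gt0) [z02 [z03 [N_lt02 lt0203 z03_lt r02 r03]]].
have z02_gt1 : 1 < z02 by lra.
have phi0 z : 1 < z -> (KH_phi N d z == 0) = root (phi_num N d) z.
  by move=> z1; apply: KH_phi_eq0; nra.
exists z02, z03; split.
- by [].
- by split; apply/eqP; rewrite phi0 //; lra.
- move=> z z1 _ /eqP; rewrite phi0 // => rz.
  exact: (phi_num_root_gt1 N_gt1 d_gt0 z02_gt1 lt0203 r02 r03 z1 rz).
move=> A A0; split => [[A02 A03] | A_out].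
  exact: (KH_quartic_four_real_roots N_gt1 d_gt0 A z02_gt1 lt0203 A0 A02 A03).
exact: (KH_quartic_two_real_roots N_gt1 d_gt0 z02_gt1 lt0203 r02 r03 A A0 A_out).
Qed.
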